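(* Let $0<p_0<1$, $0\le\beta<1$, $\epsilon>0$, $\omega\ge 0$, and let $\alpha\in[0,1]$ satisfy $$\alpha\le\frac{1-\cos[\beta\arccos(1-2p_0)]}{2p_0}.$$ Put $T_c=\frac{\arccos(1-2p_0)}{\epsilon}$. Let $\omega(t),\epsilon_x(t),\epsilon_y(t)$ be real-valued functions of time with $|\omega(t)|\le\omega$ and $\sqrt{\epsilon_x^2(t)+\epsilon_y^2(t)}\le\epsilon$, and let $H(t)=[1+\omega(t)]I_z+\epsilon_x(t)I_x+\epsilon_y(t)I_y$. Suppose the pure state $|\psi(t)\rangle$ of a single qubit evolves according to $\frac{d}{dt}|\psi(t)\rangle=-iH(t)|\psi(t)\rangle$ from an initial state $|\psi(0)\rangle$ satisfying $|\langle\psi(0)|1\rangle|^2\le\alpha p_0$. Then for every $t\in[0,(1-\beta)T_c]$ the state lies in $\mathcal{D}_c=\{|\psi\rangle: |\langle 0|\psi\rangle|^2\ge 1-p_0\}$; equivalently, if a projective measurement of $\sigma_z$ is made at time $t$, the probability of failure $p=|\langle 1|\psi(t)\rangle|^2$ is at most $p_0$.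
   Context: $\sigma_x=\begin{pmatrix}0&1\\1&0\end{pmatrix}$, $\sigma_y=\begin{pmatrix}0&-i\\i&0\end{pmatrix}$, $\sigma_z=\begin{pmatrix}1&0\\0&-1\end{pmatrix}$ are the Pauli matrices and $I_j=\frac12\sigma_j$ for $j=x,y,z$. $|0\rangle=(1,0)^T$ and $|1\rangle=(0,1)^T$ are the eigenvectors of $\sigma_z$ with eigenvalues $1$ and $-1$. Units with $\hbar=1$. The ''probability of failure'' is the probability that a $\sigma_z$ measurement yields $|1\rangle$. *)

From Stdlib Require Import Reals.
From Coquelicot Require Import Coquelicot.
Open Scope R_scope.

(* A single-qubit state is a pair of complex amplitudes (a, b) meaning
   |psi> = a |0> + b |1>.  The Hamiltonian
   H(t) = [1+w(t)] I_z + ex(t) I_x + ey(t) I_y, with I_j = sigma_j / 2, is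
   H = 1/2 [[1+w, ex - i ey], [ex + i ey, -(1+w)]]. *)

Definition H_apply0 (w ex ey : R) (a b : C) : C :=
  (/2 : C) * ((RtoC (1 + w)) * a + (RtoC ex - Ci * RtoC ey) * b).
Definition H_apply1 (w ex ey : R) (a b : C) : C :=
  (/2 : C) * ((RtoC ex + Ci * RtoC ey) * a - (RtoC (1 + w)) * b).

Definition Tc (p0 eps : R) : R := acos (1 - 2 * p0) / eps.

From Stdlib Require Import Reals Lra Psatz Classical.
From Coquelicot Require Import Coquelicot.
Open Scope R_scope.

(* Let P = |<1|psi>|^2.  The evolution preserves the norm and the I_z part of
   H(t) does not move population, so |P'| <= eps sqrt(P (1 - P)).  Writing
   P = hav theta = (1 - cos theta) / 2, the Bloch polar angle theta thus moves
   at speed at most eps, and a barrier argument compares P with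
   hav (beta arccos(1 - 2 p0) + eps t).  The hypothesis on alpha puts P(0) below
   that curve, and at t = (1 - beta) Tc the angle reaches arccos(1 - 2 p0),
   where hav equals p0. *)

Lemma is_derive_Re_Im (f : R -> C) (t : R) (l : C) :
  is_derive f t l ->
  is_derive (fun s => Re (f s)) t (Re l) /\ is_derive (fun s => Im (f s)) t (Im l).
Proof.
  intros Hf; split; unfold is_derive in *.
  - apply (filterdiff_comp' f (fun u : C_R_NormedModule => fst u) t _
             (fun u : C_R_NormedModule => fst u) Hf), filterdiff_linear.
    apply (@is_linear_fst R_AbsRing R_NormedModule R_NormedModule).
  - apply (filterdiff_comp' f (fun u : C_R_NormedModule => snd u) t _
             (fun u : C_R_NormedModule => snd u) Hf), filterdiff_linear.
    apply (@is_linear_snd R_AbsRing R_NormedModule R_NormedModule).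
Qed.

Lemma is_derive_Cmod_sqr (f : R -> C) (t : R) (l : C) :
  is_derive f t l ->
  is_derive (fun s => Cmod (f s) ^ 2) t (2 * (Re (f t) * Re l + Im (f t) * Im l)).
Proof.
  intros Hf. destruct (is_derive_Re_Im f t l Hf) as [Hre Him].
  apply (is_derive_ext (fun s => Re (f s) ^ 2 + Im (f s) ^ 2)).
  { intros s. now rewrite Cmod2_alt. }
  replace (2 * _) with (plus (INR 2 * Re l * Re (f t) ^ 1) (INR 2 * Im l * Im (f t) ^ 1))
    by (unfold plus; simpl; ring).
  apply (is_derive_plus (fun s => Re (f s) ^ 2) (fun s => Im (f s) ^ 2));
    now apply is_derive_pow.
Qed.

Lemma is_derive_zero_const (f : R -> R) :
  (forall s, 0 <= s -> is_derive f s 0) -> forall s, 0 <= s -> f s = f 0.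
Proof.
  intros Hf s [Hs | <-]; [|reflexivity].
  destruct (MVT_cor2 f (fun _ => 0) 0 s Hs) as [c [Hc _]].
  { intros c Hc. apply is_derive_Reals, Hf; lra. }
  lra.
Qed.

(* d/dt |a|^2 and d/dt |b|^2 along the Schroedinger equation, as 2 Re(conj z z'). *)
Definition ground_rate (w ex ey : R) (a b : C) : R :=
  2 * (Re a * Re (- Ci * H_apply0 w ex ey a b)%C + Im a * Im (- Ci * H_apply0 w ex ey a b)%C).

Definition excited_rate (w ex ey : R) (a b : C) : R :=
  2 * (Re b * Re (- Ci * H_apply1 w ex ey a b)%C + Im b * Im (- Ci * H_apply1 w ex ey a b)%C).

Lemma ground_rate_add_excited_rate (w ex ey : R) (a b : C) :
  ground_rate w ex ey a b + excited_rate w ex ey a b = 0.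
Proof.
  destruct a as [a1 a2], b as [b1 b2].
  unfold ground_rate, excited_rate, H_apply0, H_apply1, Ci, RtoC; simpl. field.
Qed.

Lemma excited_rate_sqr_le (w ex ey : R) (a b : C) :
  excited_rate w ex ey a b ^ 2 <= (ex ^ 2 + ey ^ 2) * (Cmod a ^ 2 * Cmod b ^ 2).
Proof.
  destruct a as [a1 a2], b as [b1 b2]. rewrite !Cmod2_alt; simpl.
  assert (Hrate : excited_rate w ex ey (a1, a2) (b1, b2)
                  = ex * (b1 * a2 - b2 * a1) + ey * (b1 * a1 + b2 * a2)).
  { unfold excited_rate, H_apply1, Ci, RtoC; simpl. field. }
  rewrite Hrate.
  (* the rate is Im(conj b (ex + i ey) a); Lagrange's identity adds the real part *)
  assert (Hlagrange :
    (ex * (b1 * a2 - b2 * a1) + ey * (b1 * a1 + b2 * a2)) ^ 2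
    + (ex * (b1 * a1 + b2 * a2) - ey * (b1 * a2 - b2 * a1)) ^ 2
    = (ex ^ 2 + ey ^ 2) * ((a1 ^ 2 + a2 ^ 2) * (b1 ^ 2 + b2 ^ 2))) by ring.
  pose proof (pow2_ge_0 (ex * (b1 * a1 + b2 * a2) - ey * (b1 * a2 - b2 * a1))).
  lra.
Qed.

Lemma excited_rate_sqr_le_population (w ex ey eps : R) (a b : C) :
  sqrt (ex ^ 2 + ey ^ 2) <= eps -> Cmod a ^ 2 + Cmod b ^ 2 = 1 ->
  excited_rate w ex ey a b ^ 2 <= eps ^ 2 * (Cmod b ^ 2 * (1 - Cmod b ^ 2)).
Proof.
  intros Hfield Hunit.
  assert (Hfield2 : ex ^ 2 + ey ^ 2 <= eps ^ 2).
  { rewrite <- (pow2_sqrt (ex ^ 2 + ey ^ 2)) by nra.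
    apply pow_incr; split; [apply sqrt_pos | exact Hfield]. }
  replace (1 - Cmod b ^ 2) with (Cmod a ^ 2) by lra.
  eapply Rle_trans; [apply excited_rate_sqr_le|].
  rewrite (Rmult_comm (Cmod b ^ 2)).
  apply Rmult_le_compat_r; [nra | exact Hfield2].
Qed.

Lemma is_derive_sign_near (f : R -> R) (x l : R) :
  is_derive f x l -> f x <> 0 ->
  exists d, 0 < d /\ forall y, Rabs (y - x) < d -> f y * f x > 0.
Proof.
  intros Hf Hfx.
  assert (Hc : continuity_pt f x)
    by (apply derivable_continuous_pt; exists l; now apply is_derive_Reals).
  destruct (Hc (Rabs (f x)) (Rabs_pos_lt _ Hfx)) as [d [Hd Hnear]].
  exists d; split; [lra|]. intros y Hy.
  assert (Hclose : Rabs (f y - f x) < Rabs (f x)).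
  { destruct (Req_dec y x) as [->|Hne].
    - rewrite Rminus_eq_0, Rabs_R0. now apply Rabs_pos_lt.
    - apply (Hnear y). repeat split; auto. }
  apply Rabs_def2 in Hclose.
  destruct (Rle_or_lt 0 (f x)) as [Hp | Hn];
    [rewrite (Rabs_pos_eq _ Hp) in Hclose | rewrite (Rabs_left _ Hn) in Hclose]; nra.
Qed.

Lemma first_zero_crossing (D D' : R -> R) (T : R) :
  (forall t, 0 <= t <= T -> is_derive D t (D' t)) ->
  0 <= T -> D 0 < 0 -> 0 <= D T ->
  exists m, 0 < m <= T /\ D m = 0 /\ forall u, 0 <= u < m -> D u < 0.
Proof.
  intros HD HT0 H0 HT.
  set (S := fun s => 0 <= s <= T /\ forall u, 0 <= u <= s -> D u < 0).
  assert (HS0 : S 0) by (split; [lra | intros u Hu; replace u with 0 by lra; exact H0]).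
  assert (Hbound : bound S) by (exists T; intros s [Hs _]; lra).
  destruct (completeness S Hbound (ex_intro _ 0 HS0)) as [m [Hub Hlub]].
  assert (Hm : 0 <= m <= T) by (split; [apply Hub | apply Hlub; intros s [Hs _]]; auto; lra).
  assert (Hleft : forall u, 0 <= u < m -> D u < 0).
  { intros u Hu.
    destruct (classic (exists s, S s /\ u <= s)) as [[s [[_ Hs] Hus]] | Hno].
    - apply Hs; lra.
    - enough (m <= u) by lra.
      apply Hlub; intros s Hs.
      destruct (Rle_or_lt s u); [auto | exfalso; apply Hno; exists s; split; auto; lra]. }
  assert (HDm : D m = 0).
  { destruct (Req_dec (D m) 0) as [|Hne]; [assumption | exfalso].
    destruct (is_derive_sign_near D m _ (HD m Hm) Hne) as [d [Hd Hsign]].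
    destruct (Rle_or_lt 0 (D m)) as [Hpos | Hneg].
    - set (u := m - Rmin (d / 2) (m / 2)).
      assert (Hm0 : 0 < m)
        by (destruct (proj1 Hm) as [Hlt | Heq]; [assumption | rewrite <- Heq in Hpos; lra]).
      assert (0 < Rmin (d / 2) (m / 2)) by (apply Rmin_glb_lt; lra).
      pose proof (Rmin_l (d / 2) (m / 2)). pose proof (Rmin_r (d / 2) (m / 2)).
      assert (D u < 0) by (apply Hleft; unfold u; lra).
      assert (D u * D m > 0) by (apply Hsign; unfold u; rewrite Rabs_left; lra).
      nra.
    - assert (HmT : m < T)
        by (destruct (proj2 Hm) as [Hlt | Heq]; [assumption | rewrite Heq in Hneg; lra]).
      set (s := Rmin (m + d / 2) T).
      assert (s <= m + d / 2) by apply Rmin_l.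
      assert (s <= T) by apply Rmin_r.
      assert (m < s) by (apply Rmin_glb_lt; lra).
      enough (S s) by (enough (s <= m) by lra; now apply Hub).
      unfold S; split; [lra|]. intros u Hu.
      destruct (Rlt_or_le u m); [apply Hleft; lra|].
      assert (D u * D m > 0) by (apply Hsign; rewrite Rabs_right; lra).
      nra. }
  exists m. repeat split; try lra; auto.
  destruct (proj1 Hm) as [Hlt | Heq]; [assumption | rewrite <- Heq in HDm; lra].
Qed.

Lemma is_derive_nonneg_at_first_zero (D : R -> R) (m l : R) :
  is_derive D m l -> 0 < m -> D m = 0 -> (forall u, 0 <= u < m -> D u < 0) -> 0 <= l.
Proof.
  intros HD Hm HDm Hleft.
  destruct (Rle_or_lt 0 l) as [|Hl]; [assumption | exfalso].
  apply is_derive_Reals in HD.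
  destruct (HD (- l / 2)) as [[d Hd] Hquot]; [lra|]; simpl in Hquot.
  set (h := - Rmin (d / 2) (m / 2)).
  assert (0 < Rmin (d / 2) (m / 2)) by (apply Rmin_glb_lt; lra).
  pose proof (Rmin_l (d / 2) (m / 2)). pose proof (Rmin_r (d / 2) (m / 2)).
  assert (Hh : h <> 0) by (unfold h; lra).
  assert (Hhd : Rabs h < d) by (unfold h; rewrite Rabs_left; lra).
  specialize (Hquot h Hh Hhd).
  rewrite HDm, Rminus_0_r in Hquot. apply Rabs_def2 in Hquot.
  assert (D (m + h) < 0) by (apply Hleft; unfold h; lra).
  assert (D (m + h) / h > 0) by (apply Rdiv_neg_neg; [lra | unfold h; lra]).
  lra.
Qed.

Lemma neg_of_deriv_neg_at_zeros (D D' : R -> R) (T : R) :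
  (forall t, 0 <= t <= T -> is_derive D t (D' t)) ->
  D 0 < 0 ->
  (forall t, 0 < t <= T -> D t = 0 -> D' t < 0) ->
  forall t, 0 <= t <= T -> D t < 0.
Proof.
  intros HD H0 Hzero t Ht.
  destruct (Rlt_or_le (D t) 0) as [|Ht0]; [assumption | exfalso].
  assert (HDt : forall s, 0 <= s <= t -> is_derive D s (D' s)) by (intros s Hs; apply HD; lra).
  destruct (first_zero_crossing D D' t HDt (proj1 Ht) H0 Ht0) as [m [Hm [HDm Hleft]]].
  pose proof (is_derive_nonneg_at_first_zero D m (D' m) (HD m ltac:(lra)) ltac:(lra) HDm Hleft).
  pose proof (Hzero m ltac:(lra) HDm). lra.
Qed.

Definition hav (x : R) : R := (1 - cos x) / 2.

Lemma is_derive_hav (x : R) : is_derive hav x (sin x / 2).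
Proof. unfold hav. auto_derive; [exact I | field]. Qed.

Lemma hav_mul_one_sub (x : R) : hav x * (1 - hav x) = (sin x / 2) ^ 2.
Proof. unfold hav. pose proof (sin2_cos2 x) as Hsc. unfold Rsqr in Hsc. nra. Qed.

Lemma hav_lt (x y : R) : 0 <= x -> x < y -> y <= PI -> hav x < hav y.
Proof. intros. unfold hav. pose proof (cos_decreasing_1 x y). lra. Qed.

Lemma hav_le (x y : R) : 0 <= x -> x <= y -> y <= PI -> hav x <= hav y.
Proof.
  intros Hx [Hxy | <-] Hy; [now apply Rlt_le, hav_lt | apply Rle_refl].
Qed.

Lemma hav_add_le (x h : R) : 0 <= h -> hav (x + h) <= hav x + h / 2.
Proof.
  intros [Hh | <-]; [| rewrite Rplus_0_r; lra].
  destruct (MVT_cor2 cos (fun y => - sin y) x (x + h)) as [c [Hc _]]; [lra | |].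
  - intros c _. apply derivable_pt_lim_cos.
  - unfold hav. pose proof (SIN_bound c). nra.
Qed.

Lemma le_of_sqr_le (x y : R) : 0 <= y -> x ^ 2 <= y ^ 2 -> x <= y.
Proof. intros. nra. Qed.

Section HavComparison.

Variables (P P' : R -> R) (k th0 T : R).
Hypothesis Hk : 0 <= k.
Hypothesis Hth0 : 0 <= th0.
Hypothesis HP : forall s, 0 <= s <= T -> is_derive P s (P' s).
Hypothesis HP' : forall s, 0 <= s <= T -> P' s ^ 2 <= k ^ 2 * (P s * (1 - P s)).
Hypothesis HP0 : P 0 <= hav th0.

(* Starting d higher and moving d faster makes the derivative of the gap strictly
   negative wherever P touches the curve, which is what the barrier needs. *)
Lemma hav_comparison_strict (d : R) :
  0 < d -> th0 + d + (k + d) * T < PI ->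
  forall t, 0 <= t <= T -> P t < hav (th0 + d + (k + d) * t).
Proof.
  intros Hd Hsmall t Ht.
  set (c := fun s => th0 + d + (k + d) * s).
  assert (Hc : forall s, 0 <= s <= T -> 0 < c s < PI).
  { intros s Hs. unfold c. assert ((k + d) * s <= (k + d) * T) by (apply Rmult_le_compat_l; lra).
    nra. }
  apply (Rminus_lt _ _), (neg_of_deriv_neg_at_zeros
    (fun s => P s - hav (c s)) (fun s => P' s - (k + d) * (sin (c s) / 2)) T);
    [| | | lra].
  - intros s Hs. apply (is_derive_minus P (fun s => hav (c s))); [now apply HP|].
    apply (is_derive_comp hav c); [apply is_derive_hav | unfold c; auto_derive; [exact I | ring]].
  - unfold c. rewrite Rmult_0_r, Rplus_0_r.
    assert (th0 + d <= PI) by (assert (0 <= (k + d) * T) by nra; lra).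
    pose proof (hav_lt th0 (th0 + d) Hth0 ltac:(lra) ltac:(lra)). lra.
  - intros s Hs Hzero.
    specialize (Hc s ltac:(lra)).
    assert (Hsin : 0 < sin (c s)) by (apply sin_gt_0; lra).
    assert (Hrate : P' s <= k * (sin (c s) / 2)).
    { apply le_of_sqr_le; [nra|].
      pose proof (HP' s ltac:(lra)) as Hbound. cbv beta in Hzero.
      replace (P s) with (hav (c s)) in Hbound by lra.
      now rewrite Rpow_mult_distr, <- hav_mul_one_sub. }
    nra.
Qed.

Lemma hav_comparison :
  th0 + k * T < PI -> forall t, 0 <= t <= T -> P t <= hav (th0 + k * t).
Proof.
  intros Hsmall t Ht. apply Rle_plus_epsilon. intros e He.
  set (gap := PI - (th0 + k * T)).
  set (d := Rmin e (gap / 2) / (1 + T)).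
  assert (HdT : d * (1 + T) = Rmin e (gap / 2)) by (unfold d; field; lra).
  assert (0 < Rmin e (gap / 2)) by (apply Rmin_glb_lt; unfold gap; lra).
  pose proof (Rmin_l e (gap / 2)). pose proof (Rmin_r e (gap / 2)).
  assert (Hd : 0 < d) by (unfold d; apply Rdiv_lt_0_compat; lra).
  assert (Hdt : d * (1 + t) <= d * (1 + T)) by (apply Rmult_le_compat_l; lra).
  pose proof (hav_comparison_strict d Hd ltac:(unfold gap in *; lra) t Ht) as Hstrict.
  replace (th0 + d + (k + d) * t) with (th0 + k * t + d * (1 + t)) in Hstrict by ring.
  pose proof (hav_add_le (th0 + k * t) (d * (1 + t)) ltac:(nra)). lra.
Qed.

End HavComparison.

Section QubitDynamics.

Variables (w ex ey : R -> R) (a b : R -> C).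
Hypothesis Hda : forall t, 0 <= t ->
  is_derive a t (- Ci * H_apply0 (w t) (ex t) (ey t) (a t) (b t))%C.
Hypothesis Hdb : forall t, 0 <= t ->
  is_derive b t (- Ci * H_apply1 (w t) (ex t) (ey t) (a t) (b t))%C.

Lemma is_derive_excited_population (t : R) : 0 <= t ->
  is_derive (fun s => Cmod (b s) ^ 2) t (excited_rate (w t) (ex t) (ey t) (a t) (b t)).
Proof. intros Ht. exact (is_derive_Cmod_sqr b t _ (Hdb t Ht)). Qed.

Lemma norm_conserved (t : R) : 0 <= t ->
  Cmod (a t) ^ 2 + Cmod (b t) ^ 2 = Cmod (a 0) ^ 2 + Cmod (b 0) ^ 2.
Proof.
  apply (is_derive_zero_const (fun s => Cmod (a s) ^ 2 + Cmod (b s) ^ 2)).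
  intros s Hs. rewrite <- (ground_rate_add_excited_rate (w s) (ex s) (ey s) (a s) (b s)).
  apply (is_derive_plus (fun s => Cmod (a s) ^ 2) (fun s => Cmod (b s) ^ 2)).
  - exact (is_derive_Cmod_sqr a s _ (Hda s Hs)).
  - exact (is_derive_Cmod_sqr b s _ (Hdb s Hs)).
Qed.

End QubitDynamics.

Theorem theorem1
  (p0 beta eps wmax alpha : R)
  (Hp0 : 0 < p0 < 1) (Hbeta : 0 <= beta < 1) (Heps : 0 < eps) (Hw : 0 <= wmax)
  (Halpha : 0 <= alpha <= 1)
  (Halpha_bd : alpha <= (1 - cos (beta * acos (1 - 2 * p0))) / (2 * p0))
  (w ex ey : R -> R)
  (Hwt : forall t, Rabs (w t) <= wmax)
  (Hext : forall t, sqrt (ex t ^ 2 + ey t ^ 2) <= eps)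
  (a b : R -> C)
  (Hnorm : Cmod (a 0) ^ 2 + Cmod (b 0) ^ 2 = 1)
  (Hda : forall t, 0 <= t ->
     is_derive a t (- Ci * H_apply0 (w t) (ex t) (ey t) (a t) (b t))%C)
  (Hdb : forall t, 0 <= t ->
     is_derive b t (- Ci * H_apply1 (w t) (ex t) (ey t) (a t) (b t))%C)
  (Hinit : Cmod (b 0) ^ 2 <= alpha * p0) :
  forall t, 0 <= t <= (1 - beta) * Tc p0 eps ->
    1 - p0 <= Cmod (a t) ^ 2 /\ Cmod (b t) ^ 2 <= p0.
Proof.
  (* wmax is irrelevant: the detuning w only rotates about the z axis. *)
  intros t Ht.
  assert (HepsT : eps * ((1 - beta) * Tc p0 eps) = (1 - beta) * acos (1 - 2 * p0))
    by (unfold Tc; field; lra).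
  set (A := acos (1 - 2 * p0)) in *.
  assert (HA : 0 < A < PI) by (apply acos_bound_lt; lra).
  assert (HhavA : hav A = p0) by (unfold hav, A; rewrite cos_acos; lra).
  assert (Hunit : forall s, 0 <= s -> Cmod (a s) ^ 2 + Cmod (b s) ^ 2 = 1)
    by (intros s Hs; rewrite (norm_conserved w ex ey a b Hda Hdb s Hs); exact Hnorm).
  assert (Hstart : Cmod (b 0) ^ 2 <= hav (beta * A)).
  { apply (Rmult_le_compat_r p0) in Halpha_bd; [|lra].
    unfold hav. replace ((1 - cos (beta * A)) / 2) with ((1 - cos (beta * A)) / (2 * p0) * p0)
      by (field; lra).
    lra. }
  pose proof (hav_comparison (fun s => Cmod (b s) ^ 2)
    (fun s => excited_rate (w s) (ex s) (ey s) (a s) (b s)) eps (beta * A)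
    ((1 - beta) * Tc p0 eps) ltac:(lra) ltac:(nra)
    (fun s Hs => is_derive_excited_population w ex ey a b Hdb s (proj1 Hs))
    (fun s Hs => excited_rate_sqr_le_population _ _ _ eps _ _ (Hext s) (Hunit s (proj1 Hs)))
    Hstart ltac:(nra) t Ht) as Hbound.
  assert (hav (beta * A + eps * t) <= hav A).
  { assert (eps * t <= eps * ((1 - beta) * Tc p0 eps)) by (apply Rmult_le_compat_l; lra).
    apply hav_le; nra. }
  pose proof (Hunit t (proj1 Ht)). cbv beta in Hbound. lra.
Qed.
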